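(* Let $G=(V,E,w)$ be a connected, locally finite weighted graph with edge weights $w_e>0$, let $x\in V$, and let $u:V\to\mathbb{R}$ satisfy $\sum_{y:\,(v,y)\in E} w_{vy}(u(y)-u(v))=0$ for every $v\in V$. For integers $k\ge 0$ define $$N(k) = \sum_{y \in V:\, d(x,y)=k+1} d_{\mathrm{in}}(y)\, u(y)^2 \;-\; \sum_{y \in V:\, d(x,y)=k} d_{\mathrm{out}}(y)\, u(y)^2 .$$ Then $N(k)\ge 0$ and $N(k+1)\ge N(k)$ for all $k\ge 0$.
   Context: $d(\cdot,\cdot)$ is the unweighted graph (shortest-path, number of edges) distance in $G$. Let $V_k=\{v\in V: d(x,v)=k\}$. For $v\in V_k$, the weighted in-degree is $d_{\mathrm{in}}(v)=\sum_{y\in V_{k-1},\,(y,v)\in E} w_{yv}$ and the weighted out-degree is $d_{\mathrm{out}}(v)=\sum_{y\in V_{k+1},\,(v,y)\in E} w_{vy}$. *)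

From HB Require Import structures.
From mathcomp Require Import all_boot all_order all_algebra.
From mathcomp Require Import boolp classical_sets fsbigop reals.
Unset Printing Implicit Defensive.
Import Order.TTheory GRing.Theory Num.Theory.
Local Open Scope ring_scope.

(* A locally finite graph on a (possibly infinite) vertex type V is given by
   its neighbour lists: (a, b) is an edge iff b \in nbrs a. *)

Fixpoint reachN (V : eqType) (nbrs : V -> seq V) (n : nat) (a b : V) : bool :=
  match n with
  | 0 => a == b
  | n'.+1 => has (fun c => reachN V nbrs n' c b) (nbrs a)
  end.

Definition isdist (V : eqType) (nbrs : V -> seq V) (x y : V) (k : nat) : bool :=
  reachN V nbrs k x y && all (fun j => ~~ reachN V nbrs j x y) (iota 0 k).

(* weighted in-degree of v, where v is taken to lie in V_k *)
Definition d_in (R : realType) (V : eqType) (nbrs : V -> seq V) (w : V -> V -> R)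
    (x : V) (k : nat) (v : V) : R :=
  \sum_(y <- nbrs v | (0 < k)%N && isdist V nbrs x y k.-1) w y v.

(* weighted out-degree of v, where v is taken to lie in V_k *)
Definition d_out (R : realType) (V : eqType) (nbrs : V -> seq V) (w : V -> V -> R)
    (x : V) (k : nat) (v : V) : R :=
  \sum_(y <- nbrs v | isdist V nbrs x y k.+1) w v y.

Definition Nflux (R : realType) (V : choiceType) (nbrs : V -> seq V) (w : V -> V -> R)
    (u : V -> R) (x : V) (k : nat) : R :=
  (\sum_(y \in [set y | isdist V nbrs x y k.+1]) d_in R V nbrs w x k.+1 y * u y ^+ 2)
  - (\sum_(y \in [set y | isdist V nbrs x y k]) d_out R V nbrs w x k y * u y ^+ 2).

Arguments reachN {V} nbrs n a b.
Arguments isdist {V} nbrs x y k.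
Arguments d_in {R V} nbrs w x k v.
Arguments d_out {R V} nbrs w x k v.
Arguments Nflux {R V} nbrs w u x k.

From HB Require Import structures.
From mathcomp Require Import all_boot all_order all_algebra.
From mathcomp Require Import boolp classical_sets fsbigop reals.
From mathcomp Require Import zify ring.
Import Order.TTheory GRing.Theory Num.Theory.
Set Implicit Arguments. Unset Strict Implicit.
Local Open Scope ring_scope.

(* Put [g a b := w_ab (u_b^2 - u_a^2)], an antisymmetric edge function, and
   write [flux g A B] for its total over the edges from A to B.  Then
   N(k) = flux g S_k S_(k+1), with S_k the sphere of radius k about x.  The
   neighbours of a vertex of S_k lie in S_(k-1), S_k or S_(k+1), so summing
   the outflow [D v = sum_y g v y] over S_(k+1) counts N(k+1), cancels the
   edges inside S_(k+1) and counts the edges back to S_k as -N(k): hence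
   N(k+1) = N(k) + sum_(S_(k+1)) D, and likewise N(0) = D x.  Harmonicity of u
   gives D v = sum_y w_vy (u_y - u_v)^2 >= 0, whence both claims. *)

Section Distance.

Variables (V : eqType) (nbrs : V -> seq V).
Hypothesis nbrs_sym : forall a b, (b \in nbrs a) = (a \in nbrs b).

Lemma reachNSr n a b c :
  reachN nbrs n a c -> b \in nbrs c -> reachN nbrs n.+1 a b.
Proof.
elim: n a => [|n IH] a /=.
  by move=> /eqP -> hb; apply/hasP; exists b.
by case/hasP=> d hd hdc hb; apply/hasP; exists d => //; apply: IH hb.
Qed.

Lemma reachNSrP n a b :
  reachN nbrs n.+1 a b -> exists2 c, reachN nbrs n a c & b \in nbrs c.
Proof.
elim: n a => [|n IH] a /=.
  by case/hasP=> d hd /eqP <-; exists a.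
by case/hasP=> d hd /IH [c hc hb]; exists c => //; apply/hasP; exists d.
Qed.

Lemma isdist_reachN x y k : isdist nbrs x y k -> reachN nbrs k x y.
Proof. by case/andP. Qed.

Lemma isdist_min x y k j :
  isdist nbrs x y k -> (j < k)%N -> ~~ reachN nbrs j x y.
Proof. by case/andP=> _ /allP H hj; apply: H; rewrite mem_iota. Qed.

Lemma isdistE x y k : isdist nbrs x y k -> forall j, isdist nbrs x y j = (j == k).
Proof.
move=> hk j; apply/idP/eqP => [hj|->//].
case: (ltngtP j k) => // h.
  by move: (isdist_min hk h); rewrite isdist_reachN.
by move: (isdist_min hj h); rewrite isdist_reachN.
Qed.

Lemma reachN_isdist x y n :
  reachN nbrs n x y -> exists2 m, (m <= n)%N & isdist nbrs x y m.
Proof.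
move=> hn; have ex : exists m, reachN nbrs m x y by exists n.
case: (ex_minnP ex) => m hm hmin; exists m; first exact: hmin.
rewrite /isdist hm; apply/allP => j; rewrite mem_iota => /= hj.
by apply/negP => /hmin; lia.
Qed.

Lemma isdist_nbr x v y k :
  isdist nbrs x v k -> y \in nbrs v ->
  exists m, [/\ isdist nbrs x y m, (k <= m.+1)%N & (m <= k.+1)%N].
Proof.
move=> hv hy.
have [m hm dm] := reachN_isdist (reachNSr (isdist_reachN hv) hy).
exists m; split => //; case: leqP => // /(isdist_min hv) /negP[].
by apply: reachNSr (isdist_reachN dm) _; rewrite -nbrs_sym.
Qed.

Fixpoint walk_ends (x : V) (n : nat) : seq V :=
  if n is n'.+1 then undup (flatten (map nbrs (walk_ends x n'))) else [:: x].

Lemma walk_ends_uniq x n : uniq (walk_ends x n).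
Proof. by case: n => //= n; apply: undup_uniq. Qed.

Lemma mem_walk_ends x n y : (y \in walk_ends x n) = reachN nbrs n x y.
Proof.
elim: n y => [|n IH] y /=; first by rewrite inE eq_sym.
rewrite mem_undup; apply/flattenP/idP.
  by case=> s /mapP [c hc ->]; apply: reachNSr; rewrite -IH.
by case/reachNSrP=> c hc hy; exists (nbrs c) => //; apply/mapP; exists c; rewrite ?IH.
Qed.

Definition sphere x k := [seq y <- walk_ends x k | isdist nbrs x y k].

Lemma sphere_uniq x k : uniq (sphere x k).
Proof. by rewrite filter_uniq // walk_ends_uniq. Qed.

Lemma mem_sphere x k y : (y \in sphere x k) = isdist nbrs x y k.
Proof.
rewrite mem_filter mem_walk_ends.
by case d: (isdist nbrs x y k); rewrite // isdist_reachN.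
Qed.

Lemma sphere_setE (x : V) k :
  [set y | isdist nbrs x y k]%classic = [set` sphere x k]%classic.
Proof. by apply/seteqP; split => y; rewrite /= mem_sphere. Qed.

End Distance.

Section Flux.

Variables (R : zmodType) (V : eqType) (nbrs : V -> seq V).
Hypothesis nbrs_uniq : forall a, uniq (nbrs a).
Hypothesis nbrs_sym : forall a b, (b \in nbrs a) = (a \in nbrs b).

Lemma big_mem_uniqC (s t : seq V) (F : V -> R) : uniq s -> uniq t ->
  \sum_(b <- s | b \in t) F b = \sum_(b <- t | b \in s) F b.
Proof.
move=> us ut; rewrite -big_filter -[RHS]big_filter; apply: perm_big.
by apply: uniq_perm; rewrite ?filter_uniq // => z; rewrite !mem_filter andbC.
Qed.

Lemma exchange_big_nbrs (A B : seq V) (f : V -> V -> R) : uniq A -> uniq B ->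
  \sum_(a <- A) \sum_(b <- nbrs a | b \in B) f a b =
  \sum_(b <- B) \sum_(a <- nbrs b | a \in A) f a b.
Proof.
move=> uA uB.
transitivity (\sum_(a <- A) \sum_(b <- B) (if a \in nbrs b then f a b else 0)).
  apply: eq_bigr => a _; rewrite big_mem_uniqC // -big_mkcond.
  by apply: eq_bigl => b; rewrite nbrs_sym.
by rewrite exchange_big; apply: eq_bigr => b _; rewrite -big_mkcond big_mem_uniqC.
Qed.

Definition flux (f : V -> V -> R) (A B : seq V) : R :=
  \sum_(a <- A) \sum_(b <- nbrs a | b \in B) f a b.

Definition outflow (f : V -> V -> R) (v : V) : R := \sum_(y <- nbrs v) f v y.

Variable f : V -> V -> R.
Hypothesis f_antisym : forall a b, f b a = - f a b.

Lemma fluxC (A B : seq V) : uniq A -> uniq B -> flux f A B = - flux f B A.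
Proof.
move=> uA uB; rewrite /flux exchange_big_nbrs // -sumrN.
by apply: eq_bigr => b _; rewrite -sumrN; apply: eq_bigr => a _.
Qed.

Lemma outflow_split_sphere x v k : isdist nbrs x v k ->
  outflow f v = \sum_(y <- nbrs v | y \in sphere nbrs x k.+1) f v y
    + \sum_(y <- nbrs v | y \in sphere nbrs x k) f v y
    + (if k is j.+1 then \sum_(y <- nbrs v | y \in sphere nbrs x j) f v y else 0).
Proof.
move=> hv.
have eq_big_nbrs (P Q : pred V) :
    (forall y m, y \in nbrs v -> isdist nbrs x y m ->
       (k <= m.+1)%N -> (m <= k.+1)%N -> P y = Q y) ->
    \sum_(y <- nbrs v | P y) f v y = \sum_(y <- nbrs v | Q y) f v y.
  move=> PQ; rewrite big_seq_cond [RHS]big_seq_cond; apply: eq_bigl => y.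
  case hy: (y \in nbrs v) => //=.
  by have [m [dm hm1 hm2]] := isdist_nbr nbrs_sym hv hy; rewrite (PQ y m).
rewrite /outflow (bigID (mem (sphere nbrs x k.+1))) -addrA /=; congr (_ + _).
rewrite (bigID (mem (sphere nbrs x k))) /=; congr (_ + _).
  by apply: eq_big_nbrs => y m _ dm; rewrite !mem_sphere !(isdistE dm); lia.
case: k hv eq_big_nbrs => [|j] _ eq_big_nbrs.
  rewrite -[RHS](big_pred0_eq 0 +%R (nbrs v) (f v)); apply: eq_big_nbrs => y m _ dm.
  by rewrite !mem_sphere !(isdistE dm); lia.
by apply: eq_big_nbrs => y m _ dm; rewrite !mem_sphere !(isdistE dm); lia.
Qed.

Lemma sum_outflow_sphere x k :
  \sum_(v <- sphere nbrs x k) outflow f v =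
    flux f (sphere nbrs x k) (sphere nbrs x k.+1)
    + flux f (sphere nbrs x k) (sphere nbrs x k)
    + (if k is j.+1 then flux f (sphere nbrs x k) (sphere nbrs x j) else 0).
Proof.
case: k => [|j]; rewrite ?addr0 /flux -!big_split [LHS]big_seq [RHS]big_seq;
  by apply: eq_bigr => v; rewrite mem_sphere => /outflow_split_sphere ->; rewrite ?addr0.
Qed.

End Flux.

Lemma flux_self_eq0 (R : numDomainType) (V : eqType) (nbrs : V -> seq V)
    (f : V -> V -> R) (A : seq V) :
  (forall a, uniq (nbrs a)) -> (forall a b, (b \in nbrs a) = (a \in nbrs b)) ->
  (forall a b, f b a = - f a b) -> uniq A -> flux nbrs f A A = 0.
Proof.
move=> nbrs_uniq nbrs_sym f_antisym uA.
have : flux nbrs f A A *+ 2 == 0 by rewrite mulr2n {1}fluxC // addNr.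
by rewrite mulrn_eq0 => /eqP.
Qed.

Definition sqdiff_flow (R : pzRingType) (V : Type) (w : V -> V -> R) (u : V -> R) :=
  fun a b => w a b * (u b ^+ 2 - u a ^+ 2).

Lemma sqdiff_flow_antisym (R : comPzRingType) (V : Type)
    (w : V -> V -> R) (u : V -> R) : (forall a b, w a b = w b a) ->
  forall a b, sqdiff_flow w u b a = - sqdiff_flow w u a b.
Proof. by move=> w_sym a b; rewrite /sqdiff_flow w_sym; ring. Qed.

Lemma outflow_sqdiff_ge0 (R : realDomainType) (V : eqType) (nbrs : V -> seq V)
    (w : V -> V -> R) (u : V -> R) (v : V) :
  (forall y, y \in nbrs v -> 0 < w v y) ->
  \sum_(y <- nbrs v) w v y * (u y - u v) = 0 ->
  0 <= outflow nbrs (sqdiff_flow w u) v.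
Proof.
move=> w_pos harmonic_v.
have -> : outflow nbrs (sqdiff_flow w u) v =
    \sum_(y <- nbrs v) w v y * (u y - u v) ^+ 2
    + 2 * u v * \sum_(y <- nbrs v) w v y * (u y - u v).
  rewrite big_distrr -big_split; apply: eq_bigr => y _; rewrite /sqdiff_flow /=; ring.
rewrite harmonic_v mulr0 addr0 big_seq; apply: sumr_ge0 => y hy.
by rewrite mulr_ge0 ?sqr_ge0 // ltW // w_pos.
Qed.

Section Nflux.

Variables (R : realType) (V : choiceType) (nbrs : V -> seq V).
Variables (w : V -> V -> R) (u : V -> R) (x : V).
Hypothesis nbrs_uniq : forall a, uniq (nbrs a).
Hypothesis nbrs_sym : forall a b, (b \in nbrs a) = (a \in nbrs b).
Hypothesis w_sym : forall a b, w a b = w b a.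

Let S := sphere nbrs x.
Let g := sqdiff_flow w u.
Let g_antisym := sqdiff_flow_antisym u w_sym.

Lemma Nflux_flux k : Nflux nbrs w u x k = flux nbrs g (S k) (S k.+1).
Proof.
rewrite /Nflux !sphere_setE -!fsbig_seq ?sphere_uniq //.
have -> : \sum_(y <- S k.+1) d_in nbrs w x k.+1 y * u y ^+ 2 =
    \sum_(z <- S k) \sum_(y <- nbrs z | y \in S k.+1) w z y * u y ^+ 2.
  rewrite (exchange_big_nbrs nbrs_uniq nbrs_sym (fun z y => w z y * u y ^+ 2))
    ?sphere_uniq //.
  by apply: eq_bigr => y _; rewrite big_distrl; apply: eq_bigl => z; rewrite mem_sphere.
rewrite /flux -sumrB; apply: eq_bigr => z _.
have -> : d_out nbrs w x k z = \sum_(y <- nbrs z | y \in S k.+1) w z y.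
  by apply: eq_bigl => y; rewrite mem_sphere.
by rewrite mulr_suml -sumrB; apply: eq_bigr => y _; rewrite /g /sqdiff_flow; ring.
Qed.

Lemma flux_sphere_self_eq0 k : flux nbrs g (S k) (S k) = 0.
Proof. exact: flux_self_eq0 nbrs_uniq nbrs_sym g_antisym (sphere_uniq nbrs x k). Qed.

Lemma Nflux0 : Nflux nbrs w u x 0 = \sum_(v <- S 0) outflow nbrs g v.
Proof. by rewrite sum_outflow_sphere // flux_sphere_self_eq0 !addr0 Nflux_flux. Qed.

Lemma NfluxS k :
  Nflux nbrs w u x k.+1 = Nflux nbrs w u x k + \sum_(v <- S k.+1) outflow nbrs g v.
Proof.
rewrite sum_outflow_sphere // flux_sphere_self_eq0 addr0 !Nflux_flux.
rewrite (fluxC nbrs_uniq nbrs_sym g_antisym (sphere_uniq _ _ k.+1) (sphere_uniq _ _ k)).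
by rewrite addrCA subrr addr0.
Qed.

End Nflux.

Theorem mainTheorem2 (R : realType) (V : choiceType) (nbrs : V -> seq V)
    (w : V -> V -> R) (u : V -> R) (x : V)
    (nbrs_uniq : forall a, uniq (nbrs a))
    (nbrs_sym : forall a b, (b \in nbrs a) = (a \in nbrs b))
    (w_sym : forall a b, w a b = w b a)
    (w_pos : forall a b, b \in nbrs a -> 0 < w a b)
    (connected : forall a b, exists n, reachN nbrs n a b)
    (harmonic : forall v, \sum_(y <- nbrs v) w v y * (u y - u v) = 0) :
  forall k : nat, 0 <= Nflux nbrs w u x k /\ Nflux nbrs w u x k <= Nflux nbrs w u x k.+1.
Proof.
(* Spheres are finite by local finiteness alone. *)
have sphere_outflow_ge0 k :
    0 <= \sum_(v <- sphere nbrs x k) outflow nbrs (sqdiff_flow w u) v.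
  by apply: sumr_ge0 => v _; apply: outflow_sqdiff_ge0 => // y; apply: w_pos.
have Nflux_ge0 k : 0 <= Nflux nbrs w u x k.
  elim: k => [|k IH]; first by rewrite Nflux0.
  by rewrite NfluxS // addr_ge0.
by move=> k; rewrite NfluxS // lerDl.
Qed.
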